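(* Let $n\ge1$, let $X_r\sim\mathrm{Beta}(1/2,1/2)$ and let $Y_r$ be the output of the binomial channel with $n$ trials and input $X_r$. Then \[ \mathbb E\!\left[\log\!\Big(nX_r(1-X_r)+\tfrac1{12}\Big)\right]=2\log\!\left(\frac{1+\sqrt{3n+1}}{4\sqrt3}\right), \] and the Shannon entropy of $Y_r$ satisfies \[ H(Y_r)\ \ge\ \log\frac{\pi}{4}+\psi(n+1), \] where $\psi$ is the digamma function.
   Context: All logarithms are natural. The binomial channel with $n$ trials has transition law $P_{Y|X}(y|x)=\binom{n}{y}x^y(1-x)^{n-y}$, $x\in[0,1]$, $y\in\{0,\dots,n\}$. $\mathrm{Beta}(1/2,1/2)$ has density $\frac{1}{\pi\sqrt{x(1-x)}}$ on $(0,1)$; the induced output pmf is $P_{Y_r}(y)=\frac{\Gamma(y+1/2)\Gamma(n-y+1/2)}{\pi\,\Gamma(y+1)\Gamma(n-y+1)}$. $H(Y)=-\sum_y P_Y(y)\log P_Y(y)$. *)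

From Stdlib Require Import Reals.
From Coquelicot Require Import Coquelicot.
Open Scope R_scope.

Definition arcsine_density (x : R) : R := / (PI * sqrt (x * (1 - x))).

Definition binom_channel (n y : nat) (x : R) : R :=
  Binomial.C n y * x ^ y * (1 - x) ^ (n - y).

(* Output pmf of the binomial channel driven by X_r ~ Beta(1/2,1/2):
   P_{Y_r}(y) = E[P_{Y|X}(y|X_r)] = improper integral over (0,1). *)
Definition PYr (n y : nat) : R :=
  RInt_gen (fun x => arcsine_density x * binom_channel n y x)
           (at_right 0) (at_left 1).

Definition entropy (n : nat) (P : nat -> R) : R :=
  - sum_f_R0 (fun y => P y * ln (P y)) n.

Definition harmonic (m : nat) : R := sum_f_R0 (fun k => / INR (S k)) (pred m) .
Definition euler_gamma : R :=
  real (Lim_seq (fun m => harmonic m - ln (INR m))).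

Definition digamma (x : R) : R :=
  - euler_gamma + Series (fun k => / INR (S k) - / (INR k + x)).

(* Substituting x = (1 - cos t)/2 turns an expectation E[F(X_r)] into the mean of F((1 - cos t)/2)
   over t in [0, pi].  For the logarithm this is the mean of ln (A - B cos^2 t), and factoring
   A - B cos^2 t = c^2 |1 - r e^(it)|^2 |1 + r e^(it)|^2 reduces it to Jensen's formula
   int_0^pi ln |1 - r e^(is)|^2 ds = 0 for |r| < 1.  For the binomial kernel the substitution gives
   Wallis integrals, so P_(Y_r)(y) = a_y a_(n-y) with a_m = C(2m,m)/4^m.  Wallis' product gives
   - ln a_m >= O_m + (ln pi - gamma)/2 - ln 2 with O_m = sum_(k<m) 1/(2k+1), and the convolution
   identities sum_y a_y a_(n-y) = 1, sum_y a_y a_(n-y) O_y = H_n / 2 turn this into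
   H(Y_r) >= H_n + ln pi - gamma - 2 ln 2 = ln (pi/4) + psi(n+1). *)

From Stdlib Require Import Reals Lra Lia.
From Coquelicot Require Import Coquelicot.
Open Scope R_scope.

(* Coquelicot's generic lemmas instantiated at [R]: [apply] cannot infer the normed-module
   instance by itself. *)
Lemma ex_derive_continuous_R (f : R -> R) x : ex_derive f x -> continuous f x.
Proof. apply (ex_derive_continuous (V := R_NormedModule)). Qed.

Lemma ex_RInt_continuous_R (f : R -> R) a b :
  (forall z, Rmin a b <= z <= Rmax a b -> continuous f z) -> ex_RInt f a b.
Proof. apply (ex_RInt_continuous (V := R_CompleteNormedModule)). Qed.

Lemma RInt_correct_R (f : R -> R) a b : ex_RInt f a b -> is_RInt f a b (RInt f a b).
Proof. apply (RInt_correct (V := R_CompleteNormedModule)). Qed.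

Lemma is_RInt_scal_R (f : R -> R) a b k l :
  is_RInt f a b l -> is_RInt (fun x => k * f x) a b (k * l).
Proof. apply (is_RInt_scal (V := R_NormedModule)). Qed.

Lemma is_RInt_plus_R (f g : R -> R) a b l1 l2 :
  is_RInt f a b l1 -> is_RInt g a b l2 -> is_RInt (fun x => f x + g x) a b (l1 + l2).
Proof. apply (is_RInt_plus (V := R_NormedModule)). Qed.

Lemma is_RInt_minus_R (f g : R -> R) a b l1 l2 :
  is_RInt f a b l1 -> is_RInt g a b l2 -> is_RInt (fun x => f x - g x) a b (l1 - l2).
Proof. apply (is_RInt_minus (V := R_NormedModule)). Qed.

Lemma is_RInt_ext_R (f g : R -> R) a b l :
  (forall x, Rmin a b < x < Rmax a b -> f x = g x) -> is_RInt f a b l -> is_RInt g a b l.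
Proof. apply (is_RInt_ext (V := R_NormedModule)). Qed.

Lemma RInt_ext_R (f g : R -> R) a b :
  (forall x, Rmin a b < x < Rmax a b -> f x = g x) -> RInt f a b = RInt g a b.
Proof. apply (RInt_ext (V := R_CompleteNormedModule)). Qed.

Lemma is_RInt_derive_R (f df : R -> R) a b :
  (forall x, Rmin a b <= x <= Rmax a b -> is_derive f x (df x)) ->
  (forall x, Rmin a b <= x <= Rmax a b -> continuous df x) ->
  is_RInt df a b (f b - f a).
Proof. apply (is_RInt_derive (V := R_CompleteNormedModule)). Qed.

(** * Harmonic sums and the coefficients [a_m = C(2m,m)/4^m] *)

Fixpoint harm (m : nat) : R :=
  match m with O => 0 | S k => harm k + / (INR k + 1) end.

Fixpoint odd_harm (m : nat) : R :=
  match m with O => 0 | S k => odd_harm k + / (2 * INR k + 1) end.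

(* [a_m] is the [m]-th moment of the arcsine law Beta(1/2,1/2). *)
Fixpoint arcsine_moment (m : nat) : R :=
  match m with O => 1 | S k => arcsine_moment k * (2 * INR k + 1) / (2 * INR k + 2) end.

Definition arcsine_pmf (n y : nat) : R := arcsine_moment y * arcsine_moment (n - y).

Lemma arcsine_moment_S k :
  (INR k + 1) * arcsine_moment (S k) = (INR k + / 2) * arcsine_moment k.
Proof. simpl. field. pose proof (pos_INR k). lra. Qed.

Lemma arcsine_moment_pos m : 0 < arcsine_moment m.
Proof.
  induction m as [|m IH]; simpl; [lra|]. pose proof (pos_INR m).
  apply Rdiv_lt_0_compat; [apply Rmult_lt_0_compat|]; lra.
Qed.

Lemma arcsine_pmf_pos n y : 0 < arcsine_pmf n y.
Proof. apply Rmult_lt_0_compat; apply arcsine_moment_pos. Qed.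

Lemma sum_arcsine_pmf_rev n (g : nat -> R) :
  sum_f_R0 (fun y => arcsine_pmf n y * g (n - y)%nat) n =
  sum_f_R0 (fun y => arcsine_pmf n y * g y) n.
Proof.
  rewrite <- sum_f_R0_skip. apply sum_eq. intros y Hy. unfold arcsine_pmf.
  replace (n - (n - y))%nat with y by lia. ring.
Qed.

(* Pairing [y] with [n - y] turns the weight [y] into [n/2]. *)
Lemma sum_index_arcsine_pmf n (g : nat -> R) :
  sum_f_R0 (fun y => INR y * arcsine_pmf n y * g y) n +
  sum_f_R0 (fun y => INR y * arcsine_pmf n y * g (n - y)%nat) n =
  INR n * sum_f_R0 (fun y => arcsine_pmf n y * g y) n.
Proof.
  rewrite <- (sum_f_R0_skip (fun y => INR y * arcsine_pmf n y * g (n - y)%nat)).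
  rewrite scal_sum, <- plus_sum. apply sum_eq. intros y Hy. unfold arcsine_pmf.
  replace (n - (n - y))%nat with y by lia. rewrite minus_INR by lia. ring.
Qed.

Lemma sum_index_arcsine_pmf_S n (g : nat -> R) :
  sum_f_R0 (fun y => INR y * arcsine_pmf (S n) y * g y) (S n) =
  sum_f_R0 (fun y => (INR y + / 2) * arcsine_pmf n y * g (S y)) n.
Proof.
  rewrite decomp_sum by lia. simpl pred. rewrite Rmult_0_l, !Rmult_0_l, Rplus_0_l.
  apply sum_eq. intros y Hy. unfold arcsine_pmf.
  replace (S n - S y)%nat with (n - y)%nat by lia. rewrite S_INR.
  transitivity ((INR y + 1) * arcsine_moment (S y) * (arcsine_moment (n - y) * g (S y))); [ring|].
  rewrite arcsine_moment_S. ring.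
Qed.

(* For [T_n = sum_y y a_y a_(n-y)]: [2 T_n = n S_n] by symmetry and [T_(n+1) = T_n + S_n / 2]
   by [(k + 1) a_(k+1) = (k + 1/2) a_k], so [S_n] is constant. *)
Lemma sum_arcsine_pmf n : sum_f_R0 (arcsine_pmf n) n = 1.
Proof.
  set (total m := sum_f_R0 (arcsine_pmf m) m).
  set (T m := sum_f_R0 (fun y => INR y * arcsine_pmf m y * 1) m).
  assert (HT : forall m, 2 * T m = INR m * total m).
  { intro m. unfold total.
    rewrite <- (sum_eq (fun y => arcsine_pmf m y * 1) (arcsine_pmf m)) by (intros; ring).
    rewrite <- (sum_index_arcsine_pmf m (fun _ => 1)). unfold T. ring. }
  assert (HTS : forall m, T (S m) = T m + total m / 2).
  { intro m. unfold T at 1. rewrite sum_index_arcsine_pmf_S. unfold T, total, Rdiv.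
    rewrite <- (Rmult_comm (/ 2)), scal_sum, <- plus_sum. apply sum_eq. intros; ring. }
  induction n as [|n IH]; [unfold arcsine_pmf; simpl; ring|].
  fold (total (S n)). fold (total n) in IH.
  pose proof (HT (S n)) as H1. rewrite HTS, S_INR in H1.
  pose proof (HT n). pose proof (pos_INR n).
  rewrite IH in H1, H. apply (Rmult_eq_reg_l (INR n + 1)); lra.
Qed.

Lemma sum_arcsine_pmf_odd_harm n :
  sum_f_R0 (fun y => arcsine_pmf n y * odd_harm y) n = harm n / 2.
Proof.
  set (E m := sum_f_R0 (fun y => arcsine_pmf m y * odd_harm y) m).
  set (U m := sum_f_R0 (fun y => INR y * arcsine_pmf m y * odd_harm y) m).
  set (V m := sum_f_R0 (fun y => INR y * arcsine_pmf m y * odd_harm (m - y)) m).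
  assert (HUV : forall m, U m + V m = INR m * E m) by (intro m; apply sum_index_arcsine_pmf).
  assert (HU : forall m, U (S m) = U m + E m / 2 + / 2).
  { intro m. unfold U at 1. rewrite sum_index_arcsine_pmf_S.
    transitivity (U m + E m / 2 + sum_f_R0 (arcsine_pmf m) m / 2);
      [|rewrite sum_arcsine_pmf; lra]. unfold U, E, Rdiv.
    rewrite <- !(Rmult_comm (/ 2)), !scal_sum, <- !plus_sum. apply sum_eq. intros y _.
    simpl odd_harm. pose proof (pos_INR y). field. lra. }
  assert (HV : forall m, V (S m) = V m + E m / 2).
  { intro m. unfold V at 1. rewrite sum_index_arcsine_pmf_S. unfold E.
    rewrite <- (sum_arcsine_pmf_rev m odd_harm). unfold V, Rdiv.
    rewrite <- !(Rmult_comm (/ 2)), scal_sum, <- plus_sum. apply sum_eq. intros y _.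
    replace (S m - S y)%nat with (m - y)%nat by lia. ring. }
  induction n as [|n IH]; [simpl sum_f_R0; simpl odd_harm; simpl harm; lra|].
  fold (E (S n)). fold (E n) in IH.
  pose proof (HUV (S n)) as H1. rewrite HU, HV, S_INR in H1.
  pose proof (HUV n) as H2. rewrite IH in H1, H2. pose proof (pos_INR n).
  apply (Rmult_eq_reg_l (INR n + 1)); [|lra]. simpl harm.
  replace ((INR n + 1) * ((harm n + / (INR n + 1)) / 2)) with
    ((INR n + 1) * (harm n / 2) + / 2) by (field; lra).
  lra.
Qed.

(** * Half-angle Wallis integrals *)

Definition half_angle_mono (i j : nat) (t : R) : R := sin (t / 2) ^ i * cos (t / 2) ^ j.

Definition wallis_int (i j : nat) : R := RInt (half_angle_mono i j) 0 PI.

Lemma half_angle_mono_continuous i j t : continuous (half_angle_mono i j) t.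
Proof. apply ex_derive_continuous_R. unfold half_angle_mono. auto_derive. exact I. Qed.

Lemma ex_RInt_half_angle_mono i j a b : ex_RInt (half_angle_mono i j) a b.
Proof. apply ex_RInt_continuous_R. intros; apply half_angle_mono_continuous. Qed.

Lemma wallis_int_correct i j : is_RInt (half_angle_mono i j) 0 PI (wallis_int i j).
Proof. apply RInt_correct_R, ex_RInt_half_angle_mono. Qed.

(* The form in which [auto_derive] writes the exponent [INR (S i)]. *)
Lemma INR_S_match (i : nat) : match i with O => 1 | S _ => INR i + 1 end = INR i + 1.
Proof. destruct i; simpl; lra. Qed.

(* Integrate the derivative of [sin (t/2) ^ (i+1) * cos (t/2) ^ (j+1)], which vanishes at both
   ends. *)
Lemma wallis_int_ibp i j :
  (INR i + 1) * wallis_int i (S (S j)) = (INR j + 1) * wallis_int (S (S i)) j.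
Proof.
  set (f t := sin (t / 2) ^ S i * cos (t / 2) ^ S j).
  set (df t := / 2 * ((INR i + 1) * half_angle_mono i (S (S j)) t
                      - (INR j + 1) * half_angle_mono (S (S i)) j t)).
  assert (Hftc : is_RInt df 0 PI (f PI - f 0)).
  { apply is_RInt_derive_R; intros x _.
    - unfold f, df, half_angle_mono. auto_derive; [exact I|].
      rewrite !INR_S_match. replace (x * / 2) with (x / 2) by reflexivity. simpl. ring.
    - apply ex_derive_continuous_R. unfold df, half_angle_mono. auto_derive. exact I. }
  assert (Hends : f PI - f 0 = 0).
  { unfold f. rewrite cos_PI2. replace (0 / 2) with 0 by field. rewrite sin_0. simpl. ring. }
  assert (Hlin : is_RInt df 0 PI
    (/ 2 * ((INR i + 1) * wallis_int i (S (S j)) - (INR j + 1) * wallis_int (S (S i)) j))).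
  { apply is_RInt_scal_R, is_RInt_minus_R; apply is_RInt_scal_R, wallis_int_correct. }
  apply (is_RInt_unique df) in Hftc. apply (is_RInt_unique df) in Hlin. lra.
Qed.

Lemma wallis_int_split i j : wallis_int i j = wallis_int (S (S i)) j + wallis_int i (S (S j)).
Proof.
  apply is_RInt_unique. eapply is_RInt_ext_R;
    [|apply is_RInt_plus_R; apply wallis_int_correct].
  intros x _. unfold half_angle_mono. pose proof (sin2_cos2 (x / 2)) as E. unfold Rsqr in E.
  transitivity (sin (x/2) ^ i * cos (x/2) ^ j *
                (sin (x/2) * sin (x/2) + cos (x/2) * cos (x/2))); [|rewrite E]; simpl pow; ring.
Qed.

Lemma wallis_int_0 : wallis_int 0 0 = PI.
Proof.
  unfold wallis_int. rewrite (RInt_ext_R _ (fun _ => 1)) by (intros; unfold half_angle_mono; simpl; ring).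
  rewrite RInt_const. unfold scal; simpl; unfold mult; simpl. ring.
Qed.

Lemma wallis_int_1 : wallis_int 1 0 = 2.
Proof.
  apply is_RInt_unique.
  replace 2 with ((fun t => -2 * cos (t / 2)) PI - (fun t => -2 * cos (t / 2)) 0).
  - apply (is_RInt_derive_R (fun t => -2 * cos (t / 2))); intros x _;
      [|apply half_angle_mono_continuous].
    auto_derive; [exact I|]. unfold half_angle_mono. simpl.
    replace (x * / 2) with (x / 2) by reflexivity. field.
  - simpl. rewrite cos_PI2. replace (0 / 2) with 0 by field. rewrite cos_0. ring.
Qed.

Lemma wallis_int_rec i : (INR i + 1) * wallis_int i 0 = (INR i + 2) * wallis_int (S (S i)) 0.
Proof. pose proof (wallis_int_ibp i 0). pose proof (wallis_int_split i 0). simpl INR in *. nra. Qed.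

Lemma wallis_int_decr i : wallis_int (S i) 0 <= wallis_int i 0.
Proof.
  apply RInt_le; [pose proof PI_RGT_0; lra| apply ex_RInt_half_angle_mono ..|].
  intros x Hx. unfold half_angle_mono. simpl. rewrite !Rmult_1_r.
  assert (0 <= sin (x/2) <= 1) by (split; [apply sin_ge_0|apply SIN_bound]; lra).
  assert (0 <= sin (x/2) ^ i) by (apply pow_le; lra).
  nra.
Qed.

Lemma wallis_int_pos i : 0 < wallis_int i 0.
Proof.
  induction i as [i IH] using (well_founded_ind Wf_nat.lt_wf).
  destruct i as [|[|i]]; [rewrite wallis_int_0; apply PI_RGT_0|rewrite wallis_int_1; lra|].
  pose proof (wallis_int_rec i). assert (0 < wallis_int i 0) by (apply IH; lia).
  pose proof (pos_INR i). nra.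
Qed.

Lemma wallis_int_mul_S i : (INR i + 1) * wallis_int i 0 * wallis_int (S i) 0 = 2 * PI.
Proof.
  induction i as [|i IH]; [rewrite wallis_int_0, wallis_int_1; simpl; ring|].
  rewrite S_INR, <- IH, (wallis_int_rec i). ring.
Qed.

Lemma wallis_int_even m : wallis_int (2 * m) 0 = PI * arcsine_moment m.
Proof.
  induction m as [|m IH]; [simpl; rewrite wallis_int_0; ring|].
  replace (2 * S m)%nat with (S (S (2 * m))) by lia.
  pose proof (wallis_int_rec (2 * m)) as H. rewrite mult_INR, IH in H.
  replace (INR 2) with 2 in H by reflexivity.
  simpl arcsine_moment. pose proof (pos_INR m).
  apply (Rmult_eq_reg_l (2 * INR m + 2)); [|lra]. rewrite <- H. field. lra.
Qed.

(* [pi a_m = W_(2m) <= W_(2m-1)] and [2m W_(2m-1) W_(2m) = 2 pi]. *)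
Lemma wallis_bound m : PI * INR m * arcsine_moment m ^ 2 <= 1.
Proof.
  destruct m as [|k]; [simpl; lra|].
  pose proof (wallis_int_mul_S (S (2 * k))) as W. pose proof (wallis_int_decr (S (2 * k))) as M.
  replace (S (S (2 * k))) with (2 * S k)%nat in W, M by lia.
  rewrite wallis_int_even in W, M. pose proof (wallis_int_pos (S (2 * k))).
  set (w := wallis_int (S (2 * k)) 0) in *. rewrite S_INR, mult_INR in W. simpl INR in W.
  rewrite S_INR. pose proof PI_RGT_0. pose proof (pos_INR k). pose proof (arcsine_moment_pos (S k)).
  set (a := arcsine_moment (S k)) in *.
  assert (Hw : w * (PI * a) = PI / (INR k + 1)).
  { apply (Rmult_eq_reg_l (2 * (INR k + 1))); [|lra]. field_simplify; lra. }
  assert (PI * a * (PI * a) <= w * (PI * a)) by (apply Rmult_le_compat_r; nra).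
  replace (PI * (INR k + 1) * a ^ 2) with ((INR k + 1) / PI * (PI * a * (PI * a))) by (field; lra).
  apply Rle_trans with ((INR k + 1) / PI * (PI / (INR k + 1))); [|right; field; lra].
  apply Rmult_le_compat_l; [apply Rle_mult_inv_pos|]; lra.
Qed.

Lemma C_add_S p q :
  Binomial.C (p + S q) p * (INR q + 1) = Binomial.C (p + q) p * (INR (p + q) + 1).
Proof.
  unfold Binomial.C. replace (p + S q - p)%nat with (S q) by lia.
  replace (p + q - p)%nat with q by lia. replace (p + S q)%nat with (S (p + q)) by lia.
  rewrite !fact_simpl, !mult_INR, !S_INR.
  pose proof (INR_fact_neq_0 p). pose proof (INR_fact_neq_0 q). pose proof (pos_INR q).
  field. repeat split; lra.
Qed.

Lemma binom_wallis_int p q :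
  Binomial.C (p + q) p * wallis_int (2 * p) (2 * q) / PI = arcsine_moment p * arcsine_moment q.
Proof.
  pose proof PI_RGT_0.
  induction q as [|q IH].
  { rewrite Nat.add_0_r. unfold Binomial.C. rewrite Nat.sub_diag. simpl (2 * 0)%nat.
    rewrite wallis_int_even. simpl. field. split; [apply INR_fact_neq_0|lra]. }
  replace (2 * S q)%nat with (S (S (2 * q))) by lia.
  pose proof (wallis_int_ibp (2 * p) (2 * q)) as H1. pose proof (wallis_int_split (2 * p) (2 * q)) as H2.
  rewrite !mult_INR in H1. simpl INR in H1.
  assert (E : wallis_int (2 * p) (S (S (2 * q))) * (2 * INR (p + q) + 2)
              = (2 * INR q + 1) * wallis_int (2 * p) (2 * q)) by (rewrite plus_INR, H2; nra).
  simpl arcsine_moment. pose proof (C_add_S p q). pose proof (pos_INR q). pose proof (pos_INR (p + q)).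
  apply (Rmult_eq_reg_r ((INR q + 1) * (2 * INR (p + q) + 2))); [|nra].
  transitivity ((Binomial.C (p + S q) p * (INR q + 1))
                * (wallis_int (2 * p) (S (S (2 * q))) * (2 * INR (p + q) + 2)) / PI); [field; lra|].
  rewrite C_add_S, E.
  transitivity ((Binomial.C (p + q) p * wallis_int (2 * p) (2 * q) / PI)
                * ((INR (p + q) + 1) * (2 * INR q + 1))); [field; lra|].
  rewrite IH. field. lra.
Qed.

(** * The substitution [x = (1 - cos t) / 2] *)

Lemma filterlim_Rminus (x y : R) :
  filterlim (fun z : R * R => fst z - snd z) (filter_prod (locally x) (locally y)) (locally (x - y)).
Proof.
  apply (filterlim_comp_2 (G := locally x) (H := locally (opp y))
           fst (fun z => opp (snd z)) (@plus R_NormedModule)).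
  - apply filterlim_fst.
  - eapply filterlim_comp; [apply filterlim_snd|apply (filterlim_opp (V := R_NormedModule))].
  - apply (filterlim_plus (V := R_NormedModule)).
Qed.

Lemma is_RInt_gen_antiderivative (f Phi : R -> R) (Fa Fb : (R -> Prop) -> Prop)
  {FFa : Filter Fa} {FFb : Filter Fb} la lb :
  filter_prod Fa Fb (fun ab => is_RInt f (fst ab) (snd ab) (Phi (snd ab) - Phi (fst ab))) ->
  filterlim Phi Fa (locally la) -> filterlim Phi Fb (locally lb) ->
  is_RInt_gen f Fa Fb (lb - la).
Proof.
  intros Hint Ha Hb.
  apply (filterlimi_lim_ext_loc (fun ab => Phi (snd ab) - Phi (fst ab))); [exact Hint|].
  apply (filterlim_comp_2 (G := locally lb) (H := locally la)
           (fun ab => Phi (snd ab)) (fun ab => Phi (fst ab)) Rminus).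
  - eapply filterlim_comp; [apply filterlim_snd|exact Hb].
  - eapply filterlim_comp; [apply filterlim_fst|exact Ha].
  - apply filterlim_Rminus.
Qed.

Lemma at_right_0_unit : at_right 0 (fun x => 0 < x < 1).
Proof.
  exists (mkposreal 1 Rlt_0_1). intros y Hy Hy0.
  change (Rabs (y - 0) < 1) in Hy. apply Rabs_def2 in Hy. lra.
Qed.

Lemma at_left_1_unit : at_left 1 (fun x => 0 < x < 1).
Proof.
  exists (mkposreal 1 Rlt_0_1). intros y Hy Hy1.
  change (Rabs (y - 1) < 1) in Hy. apply Rabs_def2 in Hy. lra.
Qed.

Lemma acos_near_1 eps : 0 < eps ->
  exists delta, 0 < delta /\ forall y, 1 - delta < y <= 1 -> acos y < eps.
Proof.
  intros Heps. pose proof PI_RGT_0. set (d := Rmin eps PI).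
  assert (Hd : 0 < d <= PI) by (split; [apply Rmin_glb_lt|apply Rmin_r]; lra).
  assert (Hcos : cos d < 1) by (rewrite <- cos_0; apply cos_decreasing_1; lra).
  exists (1 - cos d). split; [lra|]. intros y Hy.
  pose proof (acos_bound y). pose proof (Rmin_l eps PI). pose proof (COS_bound d).
  destruct (Rlt_or_le (acos y) d) as [|Hle]; [unfold d in *; lra|].
  assert (Hc : cos (acos y) <= cos d) by (apply cos_decr_1; lra).
  rewrite cos_acos in Hc by lra. lra.
Qed.

Lemma filterlim_acos_at_right_0 : filterlim (fun x => acos (1 - 2 * x)) (at_right 0) (locally 0).
Proof.
  intros P [eps Heps]. destruct (acos_near_1 eps (cond_pos eps)) as [delta [Hdelta Hnear]].
  assert (Hr : 0 < Rmin (1 / 2) (delta / 2)) by (apply Rmin_glb_lt; lra).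
  exists (mkposreal _ Hr). intros x Hx Hx0. apply Heps.
  change (Rabs (x - 0) < Rmin (1 / 2) (delta / 2)) in Hx. apply Rabs_def2 in Hx.
  pose proof (Rmin_l (1 / 2) (delta / 2)). pose proof (Rmin_r (1 / 2) (delta / 2)).
  pose proof (acos_bound (1 - 2 * x)). assert (acos (1 - 2 * x) < eps) by (apply Hnear; lra).
  change (Rabs (acos (1 - 2 * x) - 0) < eps). rewrite Rminus_0_r, Rabs_pos_eq; lra.
Qed.

Lemma filterlim_acos_at_left_1 : filterlim (fun x => acos (1 - 2 * x)) (at_left 1) (locally PI).
Proof.
  intros P [eps Heps]. destruct (acos_near_1 eps (cond_pos eps)) as [delta [Hdelta Hnear]].
  assert (Hr : 0 < Rmin (1 / 2) (delta / 2)) by (apply Rmin_glb_lt; lra).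
  exists (mkposreal _ Hr). intros x Hx Hx1. apply Heps.
  change (Rabs (x - 1) < Rmin (1 / 2) (delta / 2)) in Hx. apply Rabs_def2 in Hx.
  pose proof (Rmin_l (1 / 2) (delta / 2)). pose proof (Rmin_r (1 / 2) (delta / 2)).
  replace (1 - 2 * x) with (- (2 * x - 1)) by ring. rewrite acos_opp.
  pose proof (acos_bound (2 * x - 1)). assert (acos (2 * x - 1) < eps) by (apply Hnear; lra).
  change (Rabs (PI - acos (2 * x - 1) - PI) < eps).
  replace (PI - acos (2 * x - 1) - PI) with (- acos (2 * x - 1)) by ring.
  rewrite Rabs_Ropp, Rabs_pos_eq; lra.
Qed.

Definition hav (t : R) : R := (1 - cos t) / 2.

Lemma hav_range t : 0 <= hav t <= 1.
Proof. unfold hav. pose proof (COS_bound t). lra. Qed.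

Lemma hav_open t : 0 < t < PI -> 0 < hav t < 1.
Proof.
  intros Ht. unfold hav.
  assert (cos PI < cos t < cos 0) by (split; apply cos_decreasing_1; lra).
  rewrite cos_PI, cos_0 in *. lra.
Qed.

Lemma hav_acos x : 0 <= x <= 1 -> hav (acos (1 - 2 * x)) = x.
Proof. intros Hx. unfold hav. rewrite cos_acos by lra. field. Qed.

(* [hav t * (1 - hav t) = (sin t / 2)^2]: the Jacobian cancels the arcsine density. *)
Lemma arcsine_density_hav t : 0 < t < PI -> sin t / 2 * arcsine_density (hav t) = / PI.
Proof.
  intros Ht. pose proof (sin_gt_0 t (proj1 Ht) (proj2 Ht)). pose proof PI_RGT_0.
  unfold arcsine_density.
  replace (hav t * (1 - hav t)) with ((sin t / 2)²).
  - rewrite sqrt_Rsqr by lra. field. lra.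
  - unfold hav, Rsqr. pose proof (sin2_cos2 t) as E. unfold Rsqr in E. field_simplify. nra.
Qed.

Lemma arcsine_density_continuous x : 0 < x < 1 -> continuous arcsine_density x.
Proof.
  intros Hx. apply ex_derive_continuous_R. unfold arcsine_density. auto_derive.
  pose proof PI_RGT_0. assert (0 < x * (1 - x)) by nra.
  repeat split; try lra. apply Rgt_not_eq, Rmult_gt_0_compat; [lra|apply sqrt_lt_R0; lra].
Qed.

Section ArcsineSubstitution.

Variable F : R -> R.
Hypothesis F_continuous : forall x, 0 <= x <= 1 -> continuous F x.

Let f x := arcsine_density x * F x.
Let h t := / PI * F (hav t).
Let H (z : R) : R := RInt h 0 z.

Lemma F_hav_continuous t : continuous (fun t => F (hav t)) t.
Proof.
  apply (continuous_comp (U := R_UniformSpace) (V := R_UniformSpace) hav F).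
  - apply ex_derive_continuous_R. unfold hav. auto_derive. exact I.
  - apply F_continuous, hav_range.
Qed.

Lemma h_continuous t : continuous h t.
Proof. apply (continuous_scal_r (V := R_NormedModule) (/ PI) (fun t => F (hav t))), F_hav_continuous. Qed.

Lemma ex_RInt_h a b : ex_RInt h a b.
Proof. apply ex_RInt_continuous_R. intros; apply h_continuous. Qed.

Lemma H_continuous z : continuous H z.
Proof.
  apply (continuous_RInt_1 (V := R_NormedModule) h 0 z H).
  apply filter_forall. intros; apply RInt_correct_R, ex_RInt_h.
Qed.

Lemma is_RInt_arcsine_hav a b : 0 < a < 1 -> 0 < b < 1 ->
  is_RInt f a b (H (acos (1 - 2 * b)) - H (acos (1 - 2 * a))).
Proof.
  intros Ha Hb. set (u := acos (1 - 2 * a)). set (v := acos (1 - 2 * b)).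
  assert (Hu : 0 < u < PI) by (apply acos_bound_lt; lra).
  assert (Hv : 0 < v < PI) by (apply acos_bound_lt; lra).
  assert (Huv : forall t, Rmin u v <= t <= Rmax u v -> 0 < t < PI).
  { intros t Ht. pose proof (Rmin_glb_lt u v 0). pose proof (Rmax_lub_lt u v PI).
    pose proof (Rmin_l u v). pose proof (Rmax_l u v). lra. }
  assert (Hsub := is_RInt_comp (V := R_CompleteNormedModule) f hav (fun t => sin t / 2) u v).
  assert (Hha : hav u = a) by (apply hav_acos; lra).
  assert (Hhb : hav v = b) by (apply hav_acos; lra).
  rewrite Hha, Hhb in Hsub.
  assert (Hh : is_RInt h u v (RInt f a b)).
  { eapply is_RInt_ext_R; [|apply Hsub].
    - intros t Ht. assert (Ht' : 0 < t < PI) by (apply Huv; lra).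
      unfold f, h. rewrite <- (arcsine_density_hav t Ht').
      unfold scal; simpl; unfold mult; simpl. ring.
    - intros t Ht. apply (continuous_mult (K := R_AbsRing)).
      + apply arcsine_density_continuous, hav_open, Huv, Ht.
      + apply F_continuous, hav_range.
    - intros t _. split; [unfold hav; auto_derive; [exact I|field]|].
      apply ex_derive_continuous_R. auto_derive. exact I. }
  assert (Hval : H v - H u = RInt f a b).
  { apply (is_RInt_unique h) in Hh. rewrite <- Hh. unfold H.
    rewrite <- (RInt_Chasles (V := R_CompleteNormedModule) h 0 u v) by apply ex_RInt_h.
    change (plus (RInt h 0 u) (RInt h u v)) with (RInt h 0 u + RInt h u v). ring. }
  rewrite Hval. apply RInt_correct_R, ex_RInt_continuous_R. intros x Hx.
  apply (continuous_mult (K := R_AbsRing)); [apply arcsine_density_continuous|apply F_continuous];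
    pose proof (Rmin_glb_lt a b 0); pose proof (Rmax_lub_lt a b 1);
    pose proof (Rmin_l a b); pose proof (Rmax_l a b); lra.
Qed.

Lemma is_RInt_gen_arcsine :
  is_RInt_gen f (at_right 0) (at_left 1) (/ PI * RInt (fun t => F (hav t)) 0 PI).
Proof.
  set (Phi x := H (acos (1 - 2 * x))).
  replace (/ PI * RInt (fun t => F (hav t)) 0 PI) with (H PI - H 0).
  - apply (is_RInt_gen_antiderivative f Phi (at_right 0) (at_left 1)).
    + apply (Filter_prod _ _ _ _ _ at_right_0_unit at_left_1_unit).
      intros a b Ha Hb. apply is_RInt_arcsine_hav; assumption.
    + apply (filterlim_comp _ _ _ _ H _ _ _ filterlim_acos_at_right_0), H_continuous.
    + apply (filterlim_comp _ _ _ _ H _ _ _ filterlim_acos_at_left_1), H_continuous.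
  - assert (H0 : H 0 = 0) by apply (RInt_point (V := R_CompleteNormedModule)).
    rewrite H0, Rminus_0_r. apply (is_RInt_unique h).
    apply is_RInt_scal_R, RInt_correct_R, ex_RInt_continuous_R. intros; apply F_hav_continuous.
Qed.

End ArcsineSubstitution.

(** * Jensen's formula for [ln |1 - r e^(is)|^2] *)

Lemma is_RInt_reflect (g : R -> R) c a b l :
  is_RInt g (c - b) (c - a) l -> is_RInt (fun x => g (c - x)) a b l.
Proof.
  intros Hg. apply (is_RInt_swap (V := R_NormedModule)) in Hg.
  replace (c - a) with (-1 * a + c) in Hg by ring. replace (c - b) with (-1 * b + c) in Hg by ring.
  apply (is_RInt_comp_lin (V := R_NormedModule) g (-1) c a b) in Hg.
  apply (is_RInt_scal (V := R_NormedModule) _ _ _ (-1)) in Hg.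
  eapply is_RInt_ext_R; [|replace l with (scal (-1) (opp l)); [exact Hg|]].
  - intros x _. unfold scal; simpl; unfold mult; simpl. replace (-1 * x + c) with (c - x) by ring. ring.
  - unfold scal, opp; simpl; unfold mult, opp; simpl. ring.
Qed.

Definition log_poisson (r s : R) : R := ln (1 - 2 * r * cos s + r ^ 2).

Definition log_poisson_int (r : R) : R := RInt (log_poisson r) 0 PI.

Lemma poisson_bounds r s :
  (1 - Rabs r) ^ 2 <= 1 - 2 * r * cos s + r ^ 2 <= (1 + Rabs r) ^ 2.
Proof.
  pose proof (COS_bound s).
  assert (Hrc : Rabs (r * cos s) <= Rabs r).
  { rewrite Rabs_mult. pose proof (Rabs_pos r).
    assert (Rabs (cos s) <= 1) by (apply Rabs_le; lra). nra. }
  assert (Rabs r * Rabs r = r * r) by (rewrite <- Rabs_mult; apply Rabs_pos_eq; nra).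
  apply Rabs_le_between in Hrc. nra.
Qed.

Lemma poisson_pos r s : Rabs r < 1 -> 0 < 1 - 2 * r * cos s + r ^ 2.
Proof.
  intros Hr. pose proof (poisson_bounds r s). assert (0 < (1 - Rabs r) ^ 2) by (apply pow_lt; lra). lra.
Qed.

Lemma log_poisson_continuous r s : Rabs r < 1 -> continuous (log_poisson r) s.
Proof. intros Hr. apply ex_derive_continuous_R. unfold log_poisson. auto_derive. apply poisson_pos, Hr. Qed.

Lemma ex_RInt_log_poisson r a b : Rabs r < 1 -> ex_RInt (log_poisson r) a b.
Proof. intros Hr. apply ex_RInt_continuous_R. intros; apply log_poisson_continuous, Hr. Qed.

Lemma log_poisson_int_correct r : Rabs r < 1 -> is_RInt (log_poisson r) 0 PI (log_poisson_int r).
Proof. intros Hr. apply RInt_correct_R, ex_RInt_log_poisson, Hr. Qed.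

Lemma Rabs_log_poisson_le r rho s : Rabs r <= rho < 1 ->
  Rabs (log_poisson r s) <= 2 * ln (1 + rho) - 2 * ln (1 - rho).
Proof.
  intros [Hr Hrho]. pose proof (Rabs_pos r). pose proof (poisson_bounds r s).
  assert (0 < (1 - rho) ^ 2) by (apply pow_lt; lra).
  assert (ln ((1 - rho) ^ 2) <= log_poisson r s).
  { apply ln_le; [lra|]. assert ((1 - rho) ^ 2 <= (1 - Rabs r) ^ 2) by (apply pow_incr; lra). lra. }
  assert (log_poisson r s <= ln ((1 + rho) ^ 2)).
  { apply ln_le; [apply poisson_pos; lra|].
    assert ((1 + Rabs r) ^ 2 <= (1 + rho) ^ 2) by (apply pow_incr; lra). lra. }
  rewrite !ln_pow in * by lra. simpl INR in *.
  assert (ln (1 - rho) <= 0) by (rewrite <- ln_1; apply ln_le; lra).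
  assert (0 <= ln (1 + rho)) by (rewrite <- ln_1; apply ln_le; lra).
  apply Rabs_le. lra.
Qed.

Lemma Rabs_log_poisson_int_le r rho : Rabs r <= rho < 1 ->
  Rabs (log_poisson_int r) <= PI * (2 * ln (1 + rho) - 2 * ln (1 - rho)).
Proof.
  intros H. unfold log_poisson_int. rewrite <- (Rminus_0_r PI) at 2.
  apply abs_RInt_le_const; [pose proof PI_RGT_0; lra|apply ex_RInt_log_poisson; lra|].
  intros t _. apply Rabs_log_poisson_le, H.
Qed.

Lemma log_poisson_int_opp r : Rabs r < 1 -> log_poisson_int (- r) = log_poisson_int r.
Proof.
  intros Hr. apply is_RInt_unique. eapply is_RInt_ext_R.
  2: { apply (is_RInt_reflect (log_poisson r) PI). rewrite !Rminus_diag, Rminus_0_r.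
       apply log_poisson_int_correct, Hr. }
  intros x _. unfold log_poisson. rewrite Rtrigo_facts.cos_pi_minus. f_equal. ring.
Qed.

(* [(1 - 2 r cos s + r^2) (1 + 2 r cos s + r^2) = 1 - 2 r^2 cos (2 s) + r^4]. *)
Lemma log_poisson_int_sq r : Rabs r < 1 ->
  log_poisson_int r + log_poisson_int (- r) = log_poisson_int (r ^ 2).
Proof.
  intros Hr. pose proof PI_RGT_0. set (r2 := r ^ 2).
  assert (Hr2 : Rabs r2 < 1).
  { unfold r2. rewrite <- RPow_abs. pose proof (Rabs_pos r). simpl. nra. }
  assert (Hdouble : is_RInt (fun s => log_poisson r2 (2 * s)) 0 PI
                      (log_poisson_int r + log_poisson_int (- r))).
  { eapply is_RInt_ext_R;
      [|apply is_RInt_plus_R; apply log_poisson_int_correct; rewrite ?Rabs_Ropp; exact Hr].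
    intros s _. unfold log_poisson, r2.
    rewrite <- ln_mult by (apply poisson_pos; rewrite ?Rabs_Ropp; exact Hr).
    f_equal. rewrite cos_2a_cos. ring. }
  assert (Hperiod : is_RInt (log_poisson r2) 0 (2 * PI) (2 * log_poisson_int r2)).
  { replace (2 * log_poisson_int r2) with (log_poisson_int r2 + log_poisson_int r2) by ring.
    apply (is_RInt_Chasles (V := R_NormedModule) _ _ PI); [apply log_poisson_int_correct, Hr2|].
    eapply is_RInt_ext_R; [|apply (is_RInt_reflect (log_poisson r2) (2 * PI))].
    - intros x _. unfold log_poisson. replace (2 * PI - x) with (- x + 2 * INR 1 * PI)
        by (change (INR 1) with 1; ring). rewrite cos_period, cos_neg. reflexivity.
    - replace (2 * PI - 2 * PI) with 0 by ring. replace (2 * PI - PI) with PI by ring.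
      apply log_poisson_int_correct, Hr2. }
  assert (Hhalf :
    is_RInt (fun s => scal 2 (log_poisson r2 (2 * s + 0))) 0 PI (2 * log_poisson_int r2)).
  { apply (is_RInt_comp_lin (V := R_NormedModule)).
    replace (2 * 0 + 0) with 0 by ring. replace (2 * PI + 0) with (2 * PI) by ring. exact Hperiod. }
  apply is_RInt_scal_R with (k := / 2) in Hhalf.
  apply (is_RInt_unique (fun s => log_poisson r2 (2 * s))) in Hdouble. rewrite <- Hdouble.
  apply (is_RInt_unique (fun s => log_poisson r2 (2 * s))).
  replace (log_poisson_int r2) with (/ 2 * (2 * log_poisson_int r2)) by field.
  eapply is_RInt_ext_R; [|exact Hhalf].
  intros x _. unfold scal; simpl; unfold mult; simpl. rewrite Rplus_0_r. field.
Qed.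

Lemma eq0_of_pow2_bounded (x M : R) : (forall k, 2 ^ k * Rabs x <= M) -> x = 0.
Proof.
  intros Hk. destruct (Req_dec x 0) as [|Hx]; [assumption|exfalso].
  assert (Hp : 0 < Rabs x) by (apply Rabs_pos_lt, Hx).
  destruct (Pow_x_infinity 2 ltac:(rewrite Rabs_pos_eq; lra) (M / Rabs x + 1)) as [N HN].
  specialize (HN N (le_n N)). rewrite Rabs_pos_eq in HN by (apply pow_le; lra).
  pose proof (Hk N). assert (M / Rabs x * Rabs x = M) by (field; lra). nra.
Qed.

(* The doubling relation [2 I(r) = I(r^2)] for [I = log_poisson_int] forces the bounded [I] to vanish. *)
Lemma log_poisson_int_eq0 r : Rabs r < 1 -> log_poisson_int r = 0.
Proof.
  intros Hr. set (rho := Rabs r). set (M := PI * (2 * ln (1 + rho) - 2 * ln (1 - rho))).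
  assert (Hk : forall k s, Rabs s <= rho -> 2 ^ k * Rabs (log_poisson_int s) <= M).
  { induction k as [|k IH]; intros s Hs.
    - rewrite pow_O, Rmult_1_l. apply Rabs_log_poisson_int_le. unfold rho in *; lra.
    - assert (Hs1 : Rabs s < 1) by (unfold rho in *; lra).
      replace (2 ^ S k * Rabs (log_poisson_int s)) with (2 ^ k * Rabs (log_poisson_int (s ^ 2))).
      + apply IH. rewrite <- RPow_abs. pose proof (Rabs_pos s). simpl. nra.
      + rewrite <- (log_poisson_int_sq s Hs1), (log_poisson_int_opp s Hs1).
        replace (log_poisson_int s + log_poisson_int s) with (2 * log_poisson_int s) by ring.
        rewrite Rabs_mult, (Rabs_pos_eq 2) by lra. simpl. ring. }
  exact (eq0_of_pow2_bounded _ _ (fun k => Hk k r (Rle_refl _))).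
Qed.

(* With [sqrt A = c (1 + r^2)] and [sqrt B = 2 c r],
   [A - B cos^2 t = c^2 |1 - r e^(it)|^2 |1 + r e^(it)|^2]. *)
Lemma RInt_ln_sub_cos_sq A B : 0 < B < A ->
  RInt (fun t => ln (A - B * cos t ^ 2)) 0 PI = 2 * PI * ln ((sqrt A + sqrt (A - B)) / 2).
Proof.
  intros HB. pose proof PI_RGT_0.
  set (al := sqrt A). set (be := sqrt B). set (de := sqrt (A - B)).
  assert (Hal : al * al = A) by (apply sqrt_sqrt; lra).
  assert (Hbe : be * be = B) by (apply sqrt_sqrt; lra).
  assert (Hde : de * de = A - B) by (apply sqrt_sqrt; lra).
  assert (Pbe : 0 < be) by (apply sqrt_lt_R0; lra).
  assert (Pde : 0 < de) by (apply sqrt_lt_R0; lra).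
  set (c := (al + de) / 2). set (r := be / (2 * c)).
  assert (Pal : 0 <= al) by apply sqrt_pos.
  assert (Pc : 0 < c) by (unfold c; lra).
  assert (Hcr : 2 * c * r = be) by (unfold r; field; lra).
  assert (Hcr2 : c * (1 + r ^ 2) = al).
  { apply (Rmult_eq_reg_l (4 * c)); [|lra]. unfold r. field_simplify; [|lra]. unfold c. nra. }
  assert (Hr : Rabs r < 1).
  { assert (be < al) by (apply sqrt_lt_1; lra).
    rewrite Rabs_pos_eq by (unfold r; apply Rle_mult_inv_pos; lra).
    unfold r. apply (Rmult_lt_reg_r (2 * c)); [lra|]. field_simplify; unfold c; lra. }
  assert (Hr' : Rabs (- r) < 1) by (rewrite Rabs_Ropp; exact Hr).
  apply is_RInt_unique.
  apply is_RInt_ext_R with (fun t => 2 * ln c + (log_poisson r t + log_poisson (- r) t)).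
  - intros t _. unfold log_poisson.
    rewrite <- ln_mult by (apply poisson_pos; assumption).
    replace (2 * ln c) with (ln (c * c)) by (rewrite ln_mult by lra; ring).
    assert (0 < c * c) by nra.
    assert (0 < (1 - 2 * r * cos t + r ^ 2) * (1 - 2 * - r * cos t + (- r) ^ 2))
      by (apply Rmult_lt_0_compat; apply poisson_pos; assumption).
    rewrite <- ln_mult by assumption.
    f_equal. rewrite <- Hal, <- Hbe, <- Hcr2, <- Hcr. ring.
  - replace (2 * PI * ln c) with ((PI - 0) * (2 * ln c) + (log_poisson_int r + log_poisson_int (- r)))
      by (rewrite (log_poisson_int_eq0 r Hr), (log_poisson_int_eq0 (- r) Hr'); ring).
    apply is_RInt_plus_R; [apply (is_RInt_const (V := R_NormedModule))|].
    apply is_RInt_plus_R; apply log_poisson_int_correct; assumption.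
Qed.

(* At [x = hav t], [n x (1 - x) + 1/12 = A - B cos^2 t] with [sqrt A = sqrt (3n + 1) / (2 sqrt 3)]
   and [sqrt (A - B) = 1 / (2 sqrt 3)]. *)
Theorem arcsine_ln_expectation n : (1 <= n)%nat ->
  is_RInt_gen (fun x => arcsine_density x * ln (INR n * x * (1 - x) + / 12))
    (at_right 0) (at_left 1) (2 * ln ((1 + sqrt (3 * INR n + 1)) / (4 * sqrt 3))).
Proof.
  intros Hn1. pose proof PI_RGT_0.
  assert (Hn : 1 <= INR n) by (apply (le_INR 1), Hn1).
  set (F x := ln (INR n * x * (1 - x) + / 12)).
  assert (HF : forall x, 0 <= x <= 1 -> continuous F x).
  { intros x Hx. apply ex_derive_continuous_R. unfold F. auto_derive.
    assert (0 <= x * (1 - x)) by nra. nra. }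
  set (A := INR n / 4 + / 12). set (B := INR n / 4).
  assert (Hs3 : 0 < sqrt 3) by (apply sqrt_lt_R0; lra).
  assert (HsA : sqrt A = sqrt (3 * INR n + 1) / (2 * sqrt 3)).
  { apply sqrt_lem_1; [unfold A; lra|apply Rle_mult_inv_pos; [apply sqrt_pos|lra]|].
    transitivity ((sqrt (3 * INR n + 1) * sqrt (3 * INR n + 1)) / (4 * (sqrt 3 * sqrt 3))); [field; lra|].
    rewrite !sqrt_sqrt by lra. unfold A. field. }
  assert (HsAB : sqrt (A - B) = 1 / (2 * sqrt 3)).
  { apply sqrt_lem_1; [unfold A, B; lra|apply Rle_mult_inv_pos; lra|].
    transitivity (1 / (4 * (sqrt 3 * sqrt 3))); [field; lra|].
    rewrite sqrt_sqrt by lra. unfold A, B. field. }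
  assert (Hval : / PI * RInt (fun t => F (hav t)) 0 PI
                 = 2 * ln ((1 + sqrt (3 * INR n + 1)) / (4 * sqrt 3))).
  { rewrite (RInt_ext_R _ (fun t => ln (A - B * cos t ^ 2)))
      by (intros; unfold F, hav, A, B; f_equal; field).
    rewrite RInt_ln_sub_cos_sq, HsA, HsAB by (unfold A, B; lra).
    replace ((sqrt (3 * INR n + 1) / (2 * sqrt 3) + 1 / (2 * sqrt 3)) / 2)
      with ((1 + sqrt (3 * INR n + 1)) / (4 * sqrt 3)) by (field; lra).
    field. lra. }
  rewrite <- Hval. apply (is_RInt_gen_arcsine F HF).
Qed.

(** * Harmonic numbers, Euler's constant and the digamma function *)

Lemma ln_le_sub_1 y : 0 < y -> ln y <= y - 1.
Proof. intros Hy. pose proof (exp_ineq1_le (ln y)). rewrite exp_ln in * by lra. lra. Qed.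

Lemma ln_succ_div_le k : 0 <= k -> ln ((k + 2) / (k + 1)) <= / (k + 1).
Proof.
  intros Hk. replace (/ (k + 1)) with ((k + 2) / (k + 1) - 1) by (field; lra).
  apply ln_le_sub_1, Rdiv_lt_0_compat; lra.
Qed.

(* [harmonic m] sums [pred m + 1] terms, so it agrees with [harm m] only for [m >= 1]. *)
Lemma harmonic_harm m : harmonic (S m) = harm (S m).
Proof.
  unfold harmonic. simpl pred. induction m as [|m IH]; [simpl; field|].
  rewrite tech5, IH. change (harm (S (S m))) with (harm (S m) + / (INR (S m) + 1)).
  rewrite (S_INR (S m)). reflexivity.
Qed.

Lemma ln_le_harm m : ln (INR m + 1) <= harm m.
Proof.
  induction m as [|m IH]; [simpl; rewrite Rplus_0_l, ln_1; lra|].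
  pose proof (pos_INR m). rewrite S_INR. simpl harm.
  replace (INR m + 1 + 1) with ((INR m + 1) * ((INR m + 2) / (INR m + 1))) by (field; lra).
  rewrite ln_mult by (try apply Rdiv_lt_0_compat; lra).
  pose proof (ln_succ_div_le (INR m)). lra.
Qed.

Definition euler_gap (N : nat) : R := harm (S N) - ln (INR (S N)).

Lemma euler_gap_decr N : euler_gap (S N) <= euler_gap N.
Proof.
  unfold euler_gap. pose proof (pos_INR N).
  change (harm (S (S N))) with (harm (S N) + / (INR (S N) + 1)). rewrite !S_INR.
  set (q := (INR N + 1) / (INR N + 2)).
  assert (Hq : 0 < q) by (apply Rdiv_lt_0_compat; lra).
  replace (ln (INR N + 1 + 1)) with (ln (INR N + 1) - ln q)
    by (rewrite <- ln_div by lra; f_equal; unfold q; field; lra).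
  pose proof (ln_le_sub_1 q Hq).
  replace (q - 1) with (- / (INR N + 1 + 1)) in * by (unfold q; field; lra).
  lra.
Qed.

Lemma euler_gap_ge0 N : 0 <= euler_gap N.
Proof.
  unfold euler_gap. pose proof (ln_le_harm N). rewrite S_INR.
  change (harm (S N)) with (harm N + / (INR N + 1)).
  pose proof (pos_INR N). assert (0 < / (INR N + 1)) by (apply Rinv_0_lt_compat; lra). lra.
Qed.

Lemma is_lim_seq_euler_gap : is_lim_seq euler_gap euler_gamma.
Proof.
  assert (Ex : ex_finite_lim_seq euler_gap)
    by (apply ex_finite_lim_seq_decr with 0; [apply euler_gap_decr|apply euler_gap_ge0]).
  destruct Ex as [l Hl].
  replace euler_gamma with l; [exact Hl|].
  unfold euler_gamma. rewrite <- Lim_seq_incr_1.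
  rewrite (Lim_seq_ext _ euler_gap) by (intros N; unfold euler_gap; rewrite harmonic_harm; reflexivity).
  rewrite (is_lim_seq_unique _ _ Hl). reflexivity.
Qed.

Lemma harm_add_bounds m n : 0 <= harm (m + n) - harm m <= INR n / (INR m + 1).
Proof.
  pose proof (pos_INR m).
  induction n as [|n IH]; [rewrite Nat.add_0_r; unfold Rdiv; simpl; lra|].
  rewrite Nat.add_succ_r. change (harm (S (m + n))) with (harm (m + n) + / (INR (m + n) + 1)).
  rewrite S_INR, plus_INR in *. pose proof (pos_INR n).
  assert (0 < / (INR m + INR n + 1)) by (apply Rinv_0_lt_compat; lra).
  assert (/ (INR m + INR n + 1) <= / (INR m + 1)) by (apply Rinv_le_contravar; lra).
  unfold Rdiv in *. lra.
Qed.

Lemma digamma_partial_sum n N :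
  sum_f_R0 (fun k => / INR (S k) - / (INR k + (INR n + 1))) N = harm n + harm (S N) - harm (S N + n).
Proof.
  induction N as [|N IH].
  - simpl sum_f_R0. change (S 0 + n)%nat with (S n). simpl harm. simpl INR. field.
    pose proof (pos_INR n). lra.
  - rewrite tech5, IH. change (S (S N) + n)%nat with (S (S N + n)).
    change (harm (S (S N))) with (harm (S N) + / (INR (S N) + 1)).
    change (harm (S (S N + n))) with (harm (S N + n) + / (INR (S N + n) + 1)).
    rewrite plus_INR, (S_INR (S N)). replace (INR (S N) + (INR n + 1)) with (INR (S N) + INR n + 1) by ring.
    ring.
Qed.

Lemma digamma_nat n : digamma (INR n + 1) = - euler_gamma + harm n.
Proof.
  unfold digamma. f_equal. apply is_series_unique.
  enough (L : is_lim_seq (sum_n (fun k => / INR (S k) - / (INR k + (INR n + 1)))) (harm n)) by exact L.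
  apply is_lim_seq_ext with (fun N => harm n + harm (S N) - harm (S N + n)).
  { intros N. rewrite sum_n_Reals, digamma_partial_sum. reflexivity. }
  apply is_lim_seq_le_le with (fun N => harm n - INR n * / (INR (S N) + 1)) (fun _ => harm n).
  - intros N. pose proof (harm_add_bounds (S N) n). unfold Rdiv in *. lra.
  - replace (harm n) with (harm n - INR n * 0) at 1 by ring.
    apply is_lim_seq_minus'; [apply is_lim_seq_const|apply (is_lim_seq_scal_l _ (INR n) 0)].
    apply is_lim_seq_ext with (fun N => / INR (N + 2)).
    { intros N. replace (N + 2)%nat with (S (S N)) by lia. rewrite (S_INR (S N)). reflexivity. }
    apply (is_lim_seq_incr_n (fun N => / INR N) 2 0). replace (Finite 0) with (Rbar_inv p_infty) by reflexivity.
    apply is_lim_seq_inv; [apply is_lim_seq_INR|discriminate].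
  - apply is_lim_seq_const.
Qed.

(** * A lower bound on [- ln a_m] *)

Lemma odd_harm_harm M : odd_harm M = harm (2 * M) - harm M / 2.
Proof.
  induction M as [|M IH]; [simpl; lra|].
  replace (2 * S M)%nat with (S (S (2 * M))) by lia.
  change (odd_harm (S M)) with (odd_harm M + / (2 * INR M + 1)).
  change (harm (S (S (2 * M)))) with (harm (2 * M) + / (INR (2 * M) + 1) + / (INR (S (2 * M)) + 1)).
  change (harm (S M)) with (harm M + / (INR M + 1)).
  rewrite IH, S_INR, mult_INR. change (INR 2) with 2. pose proof (pos_INR M). field. lra.
Qed.

Definition wallis_gap (m : nat) : R := - ln (arcsine_moment m) - odd_harm m.

Lemma wallis_gap_decr m : wallis_gap (S m) <= wallis_gap m.
Proof.
  unfold wallis_gap. pose proof (pos_INR m). pose proof (arcsine_moment_pos m).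
  simpl arcsine_moment. simpl odd_harm. unfold Rdiv. rewrite Rmult_assoc.
  rewrite ln_mult by (try apply Rmult_lt_0_compat; try apply Rinv_0_lt_compat; lra).
  replace ((2 * INR m + 1) * / (2 * INR m + 2)) with (/ ((2 * INR m + 1 + 1) / (2 * INR m + 1)))
    by (field; lra).
  rewrite ln_Rinv by (apply Rdiv_lt_0_compat; lra).
  replace (2 * INR m + 1 + 1) with ((2 * INR m) + 2) by ring.
  pose proof (ln_succ_div_le (2 * INR m) ltac:(lra)). lra.
Qed.

Lemma wallis_gap_le m M : (m <= M)%nat -> wallis_gap M <= wallis_gap m.
Proof. induction 1 as [|M _ IH]; [lra|]. pose proof (wallis_gap_decr M). lra. Qed.

Lemma ln_wallis_bound M : (1 <= M)%nat -> (ln PI + ln (INR M)) / 2 <= - ln (arcsine_moment M).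
Proof.
  intros HM. pose proof (wallis_bound M). pose proof PI_RGT_0. pose proof (arcsine_moment_pos M).
  assert (0 < INR M) by (apply lt_0_INR; lia).
  assert (0 < PI * INR M * arcsine_moment M ^ 2) by (apply Rmult_lt_0_compat; [nra|apply pow_lt; lra]).
  assert (ln (PI * INR M * arcsine_moment M ^ 2) <= 0) by (rewrite <- ln_1; apply ln_le; lra).
  rewrite !ln_mult, ln_pow in * by (try apply pow_lt; nra). simpl INR in *. lra.
Qed.

(* The limit of [wallis_gap], by Wallis' product. *)
Definition wallis_gap_limit : R := (ln PI - euler_gamma) / 2 - ln 2.

(* A lower bound for [wallis_gap (S N)], from [pi M a_M^2 <= 1]. *)
Definition wallis_gap_minorant (N : nat) : R := (ln PI + ln (INR (S N))) / 2 - odd_harm (S N).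

Lemma wallis_gap_minorant_euler_gap N :
  wallis_gap_minorant N = ln PI / 2 - ln 2 - euler_gap (2 * N + 1) + euler_gap N / 2.
Proof.
  unfold wallis_gap_minorant, euler_gap. rewrite odd_harm_harm.
  replace (S (2 * N + 1)) with (2 * S N)%nat by lia. rewrite mult_INR. change (INR 2) with 2.
  rewrite ln_mult by (try apply lt_0_INR; lia || lra). lra.
Qed.

Lemma is_lim_seq_wallis_gap_minorant : is_lim_seq wallis_gap_minorant wallis_gap_limit.
Proof.
  assert (Hodd : is_lim_seq (fun N => euler_gap (2 * N + 1)) euler_gamma).
  { apply (is_lim_seq_subseq euler_gap euler_gamma (fun N => 2 * N + 1)%nat).
    - apply eventually_subseq. intros; lia.
    - apply is_lim_seq_euler_gap. }
  apply is_lim_seq_ext with (fun N => ln PI / 2 - ln 2 - euler_gap (2 * N + 1) + / 2 * euler_gap N).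
  { intros N. rewrite wallis_gap_minorant_euler_gap. unfold Rdiv. ring. }
  replace wallis_gap_limit with (ln PI / 2 - ln 2 - euler_gamma + / 2 * euler_gamma)
    by (unfold wallis_gap_limit; field).
  apply is_lim_seq_plus'; [apply is_lim_seq_minus'; [apply is_lim_seq_const|exact Hodd]|].
  apply (is_lim_seq_scal_l _ (/ 2) euler_gamma), is_lim_seq_euler_gap.
Qed.

Lemma neg_ln_arcsine_moment_ge m : odd_harm m + wallis_gap_limit <= - ln (arcsine_moment m).
Proof.
  assert (Hle : forall N, wallis_gap_minorant (N + m) <= wallis_gap m).
  { intros N. apply Rle_trans with (wallis_gap (S (N + m))); [|apply wallis_gap_le; lia].
    unfold wallis_gap_minorant, wallis_gap. pose proof (ln_wallis_bound (S (N + m)) ltac:(lia)). lra. }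
  pose proof is_lim_seq_wallis_gap_minorant as Hlim. apply (is_lim_seq_incr_n _ m) in Hlim.
  pose proof (is_lim_seq_le _ _ _ _ Hle Hlim (is_lim_seq_const (wallis_gap m))) as Hm.
  unfold wallis_gap in Hm. simpl in Hm. lra.
Qed.

(** * The output law and its entropy *)

Lemma PYr_eq n y : (y <= n)%nat -> PYr n y = arcsine_pmf n y.
Proof.
  intros Hy. pose proof PI_RGT_0.
  assert (Hcont : forall x, 0 <= x <= 1 -> continuous (binom_channel n y) x).
  { intros x _. apply ex_derive_continuous_R. unfold binom_channel. auto_derive. exact I. }
  unfold PYr. rewrite (is_RInt_gen_unique _ _ (is_RInt_gen_arcsine _ Hcont)).
  rewrite (RInt_ext_R _ (fun t => Binomial.C n y * half_angle_mono (2 * y) (2 * (n - y)) t)).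
  2: { intros t _. unfold binom_channel, half_angle_mono, hav. rewrite !pow_mult.
       assert (E1 : (1 - cos t) / 2 = sin (t / 2) ^ 2).
       { replace t with (2 * (t / 2)) at 1 by field. rewrite cos_2a_sin. field. }
       assert (E2 : 1 - (1 - cos t) / 2 = cos (t / 2) ^ 2).
       { rewrite E1. pose proof (sin2_cos2 (t / 2)) as S2. unfold Rsqr in S2. simpl. lra. }
       rewrite E2, E1. ring. }
  rewrite (is_RInt_unique _ 0 PI (Binomial.C n y * wallis_int (2 * y) (2 * (n - y))))
    by apply is_RInt_scal_R, wallis_int_correct.
  unfold arcsine_pmf. rewrite <- binom_wallis_int. replace (y + (n - y))%nat with n by lia.
  field. lra.
Qed.

(* With [c = wallis_gap_limit], [- ln P(y) >= O_y + O_(n-y) + 2 c], and the identities for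
   [a_y a_(n-y)] sum the right side to [H_n + 2 c]. *)
Theorem entropy_PYr_ge n : ln (PI / 4) + digamma (INR n + 1) <= entropy n (PYr n).
Proof.
  unfold entropy. rewrite digamma_nat.
  rewrite (sum_eq _ (fun y => arcsine_pmf n y * (ln (arcsine_moment y) + ln (arcsine_moment (n - y)))))
    by (intros y Hy; rewrite PYr_eq by lia; unfold arcsine_pmf; rewrite ln_mult by apply arcsine_moment_pos;
        reflexivity).
  set (L := sum_f_R0 _ n).
  assert (Hsum : L + sum_f_R0 (fun y => arcsine_pmf n y * odd_harm y) n
                   + sum_f_R0 (fun y => arcsine_pmf n y * odd_harm (n - y)%nat) n
                   + 2 * wallis_gap_limit * sum_f_R0 (arcsine_pmf n) n <= 0).
  { unfold L. rewrite scal_sum, <- !plus_sum.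
    apply Rle_trans with (sum_f_R0 (fun _ => 0) n); [apply sum_Rle; intros y _|rewrite sum_cte; lra].
    pose proof (neg_ln_arcsine_moment_ge y). pose proof (neg_ln_arcsine_moment_ge (n - y)).
    pose proof (arcsine_pmf_pos n y). nra. }
  rewrite sum_arcsine_pmf_rev, sum_arcsine_pmf_odd_harm, sum_arcsine_pmf in Hsum.
  assert (Hln : ln (PI / 4) = ln PI - 2 * ln 2).
  { pose proof PI_RGT_0. replace 4 with (2 * 2) by ring.
    rewrite ln_div, ln_mult by lra. ring. }
  unfold wallis_gap_limit in Hsum. lra.
Qed.


Theorem mainTheorem15 (n : nat) (hn : (1 <= n)%nat) :
  is_RInt_gen
    (fun x => arcsine_density x * ln (INR n * x * (1 - x) + / 12))
    (at_right 0) (at_left 1)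
    (2 * ln ((1 + sqrt (3 * INR n + 1)) / (4 * sqrt 3)))
  /\
  ln (PI / 4) + digamma (INR n + 1) <= entropy n (PYr n).
Proof. split; [apply arcsine_ln_expectation, hn|apply entropy_PYr_ge]. Qed.
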